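(* Let $S$ be a numerical semigroup and let $b\in\mathrm U(\mathrm{Betti}(S))$. Then either $b$ is a minimal element of $(\mathrm{Betti}(S),\le_S)$ and all factorizations of $b$ are isolated, or the number $\mathrm i(b)$ of isolated factorizations of $b$ equals $\mathrm{nc}(\nabla_b)-1$.
   Context: A numerical semigroup $S$ is a submonoid of $(\mathbb N,+)$ with finite complement, minimally generated by $\{n_1,\dots,n_e\}$. Write $a\le_S b$ if $b-a\in S$. Let $\varphi:\mathbb N^e\to S$, $\varphi(a)=\sum_ia_in_i$; $\mathrm Z(s)=\varphi^{-1}(s)$. $\nabla_s$ is the graph on $\mathrm Z(s)$ with distinct $x,y$ adjacent iff $x\cdot y\ne0$; $\mathrm{nc}(\nabla_s)$ is its number of connected components; $s$ is a Betti element if $\nabla_s$ is disconnected; $\mathrm{Betti}(S)$ is the set of Betti elements. For a poset $(X,\le)$, $\mathrm U(X)=\{x\in X: \{y\in X:y\le x\}\text{ is totally ordered}\}$; here $X=(\mathrm{Betti}(S),\le_S)$. A factorization $z\in\mathrm Z(s)$ is isolated if $z\cdot x=0$ for all $x\in\mathrm Z(s)\setminus\{z\}$; $\mathrm i(s)$ is the number of isolated factorizations of $s$. *)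

From mathcomp Require Import all_boot.
Set Implicit Arguments. Unset Strict Implicit. Unset Printing Implicit Defensive.

Section NS.
Variables (e : nat) (n : 'I_e -> nat).

Definition inS (s : nat) : Prop :=
  exists a : 'I_e -> nat, \sum_(i < e) a i * n i = s.

Definition is_min_gen_numerical_semigroup : Prop :=
  (forall i, 0 < n i) /\
  (exists N, forall m, N <= m -> inS m) /\
  (forall i : 'I_e, ~ exists a : 'I_e -> nat,
        a i = 0 /\ \sum_(j < e) a j * n j = n i).

Definition leS (a b : nat) : Prop := a <= b /\ inS (b - a).

(* Vectors in N^e whose coordinates are at most s; since every n_i >= 1,
   every factorization of s is of this form. *)
Definition vec (s : nat) := {ffun 'I_e -> 'I_s.+1}.

Definition phi s (x : vec s) : nat := \sum_(i < e) (x i : nat) * n i.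

Definition Z (s : nat) : {set vec s} := [set x | phi x == s].

Definition dot s (x y : vec s) : nat := \sum_(i < e) (x i : nat) * (y i : nat).

Definition nabla_edge (s : nat) : rel (vec s) :=
  fun x y => [&& x \in Z s, y \in Z s, x != y & dot x y != 0].

Definition nc (s : nat) : nat := n_comp (@nabla_edge s) (mem (Z s)).

Definition is_Betti (s : nat) : Prop := 1 < nc s.

Definition Betti_minimal (b : nat) : Prop :=
  is_Betti b /\ forall y, is_Betti y -> leS y b -> y = b.

Definition in_U_Betti (b : nat) : Prop :=
  is_Betti b /\
  forall x y, is_Betti x -> is_Betti y -> leS x b -> leS y b -> leS x y \/ leS y x.

Definition isolated (s : nat) (z : vec s) : Prop :=
  z \in Z s /\ forall x, x \in Z s -> x != z -> dot z x = 0.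

Definition isolatedb (s : nat) (z : vec s) : bool :=
  (z \in Z s) && [forall x, ((x \in Z s) && (x != z)) ==> (dot z x == 0)].

Definition num_isolated (s : nat) : nat := #|[set z : vec s | isolatedb z]|.

End NS.

From mathcomp Require Import all_boot zify.
From Stdlib Require Import Classical.
Set Implicit Arguments. Unset Strict Implicit. Unset Printing Implicit Defensive.

(* Two facts about the graphs nabla_s drive the proof:
   - below any two distinct factorizations p, q of s there is a Betti element:
     some Betti b' has a factorization a <= p (induction on s: if s is not
     Betti, p has a neighbour r, and p - e_i, r - e_i are distinct
     factorizations of s - n_i for a common support index i);
   - hence a non-isolated factorization of b dominates a factorization of a
     Betti element strictly below b for <=_S.
   If no Betti element lies strictly below b, then b is minimal and every
   factorization is isolated.  Otherwise, as b \in U(Betti(S)), the Betti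
   elements strictly below b form a chain with a greatest element b' = b - w;
   every non-isolated factorization of b is then connected, through a
   factorization containing w, to u + w for u \in Z(b'), so all non-isolated
   factorizations form a single component and nc(nabla_b) = i(b) + 1. *)

Lemma bounded_max (P : nat -> Prop) (m : nat) :
  (exists k, P k) -> (forall k, P k -> k <= m) ->
  exists k, P k /\ forall k', P k' -> k' <= k.
Proof.
elim: m => [|m IH] [k Pk] bound.
  by exists k; split=> // k' Pk'; apply: leq_trans (bound k' Pk') (leq0n k).
have [Pm | notPm] := classic (P m.+1); first by exists m.+1.
apply: IH => [|k' Pk']; first by exists k.
have := bound k' Pk'; rewrite leq_eqVlt ltnS => /orP[/eqP Ek'|] //.
by rewrite Ek' in Pk'.
Qed.

Section Factorizations.
Variables (e : nat) (n : 'I_e -> nat).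

Definition weight (a : 'I_e -> nat) : nat := \sum_(i < e) a i * n i.

Definition coords s (x : vec e s) : 'I_e -> nat := fun i => x i.

(* The bounded vector with coordinates a; faithful when a factors s. *)
Definition fact_of s (a : 'I_e -> nat) : vec e s := [ffun i => inord (a i)].

Definition Betti_below (b b' : nat) : Prop :=
  [/\ is_Betti n b', leS n b' b & b' <> b].

Lemma weightD a c : weight (fun i => a i + c i) = weight a + weight c.
Proof. by rewrite /weight -big_split; apply: eq_bigr => i _; rewrite mulnDl. Qed.

Lemma weightB a c : (forall i, c i <= a i) ->
  weight (fun i => a i - c i) = weight a - weight c.
Proof.
move=> le_ca; apply/eqP; rewrite -(eqn_add2r (weight c)) -weightD subnK.
  by apply/eqP/eq_bigr => i _; rewrite subnK.
by apply: leq_sum => i _; rewrite leq_mul2r le_ca orbT.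
Qed.

Lemma weight_mono a c : (forall i, a i <= c i) -> weight a <= weight c.
Proof. by move=> le_ac; apply: leq_sum => i _; rewrite leq_mul2r le_ac orbT. Qed.

Lemma weight_pred a s i : weight a = s -> 0 < a i ->
  weight (fun j => a j - (j == i)) = s - n i.
Proof.
move=> <- a_pos; rewrite weightB => [|j]; last by case: eqP => // ->.
congr (_ - _); rewrite /weight (bigD1 i) //= eqxx mul1n big1 ?addn0 //.
by move=> j /negbTE ->.
Qed.

Lemma weight_pos a : 0 < weight a -> exists j, 0 < a j.
Proof.
rewrite lt0n /weight sum_nat_eq0 => /forallPn[j]; rewrite muln_eq0 negb_or.
by case/andP; rewrite -lt0n; exists j.
Qed.

Lemma in_Z s (x : vec e s) : (x \in Z n s) = (weight (coords x) == s).
Proof. by rewrite inE. Qed.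

Lemma vec_eqP s (x y : vec e s) : reflect (coords x =1 coords y) (x == y).
Proof. by apply: (iffP eqP) => [-> //|eq_xy]; apply/ffunP => i; apply/val_inj/eq_xy. Qed.

Lemma vec_neq s (x y : vec e s) : x != y -> exists j, coords x j <> coords y j.
Proof.
case: (pickP (fun j => coords x j != coords y j)) => [j /eqP|same]; first by exists j.
by case/negP; apply/vec_eqP => j; apply/eqP/negbFE/same.
Qed.

Lemma dot_neq0P s (x y : vec e s) :
  reflect (exists i, 0 < coords x i /\ 0 < coords y i) (dot x y != 0).
Proof.
rewrite /dot sum_nat_eq0 negb_forall.
apply: (iffP existsP) => [[i]|[i [x_pos y_pos]]].
  by rewrite /= muln_eq0 negb_or -!lt0n => /andP[]; exists i.
by exists i; rewrite /= muln_eq0 negb_or -!lt0n x_pos y_pos.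
Qed.

Lemma leS_refl x : leS n x x.
Proof. by split=> //; exists (fun=> 0); rewrite subnn big1. Qed.

Lemma dotC s (x y : vec e s) : dot x y = dot y x.
Proof. by apply: eq_bigr => i _; rewrite mulnC. Qed.

Section PositiveGenerators.
Hypothesis n_pos : forall i, 0 < n i.

Lemma coord_le_weight a i : a i <= weight a.
Proof.
rewrite /weight (bigD1 i) //= (leq_trans _ (leq_addr _ _)) //.
by rewrite leq_pmulr.
Qed.

Lemma coords_fact_of s a : weight a = s -> coords (fact_of s a) =1 a.
Proof. by move=> wa i; rewrite /coords ffunE inordK // ltnS -wa coord_le_weight. Qed.

Lemma fact_of_Z s a : weight a = s -> fact_of s a \in Z n s.
Proof.
move=> wa; rewrite in_Z -[X in _ == X]wa; apply/eqP/eq_bigr => i _.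
by rewrite (coords_fact_of wa).
Qed.

Lemma Betti_two s :
  is_Betti n s -> exists x y : vec e s, [/\ x \in Z n s, y \in Z n s & x != y].
Proof.
rewrite /is_Betti /nc => /card_gt1P[x [y [rx ry ne_xy]]].
by move: rx ry => /andP[_ xZ] /andP[_ yZ]; exists x, y.
Qed.

Lemma Betti_pos s : is_Betti n s -> 0 < s.
Proof.
case/Betti_two=> x [y [xZ yZ]]; rewrite lt0n; apply: contraNN => /eqP s0.
move: xZ yZ; rewrite !in_Z => /eqP wx /eqP wy; apply/vec_eqP => j.
by have := coord_le_weight (coords x) j; have := coord_le_weight (coords y) j; lia.
Qed.

Notation nabla s := (@nabla_edge e n s).

Lemma nabla_sym s : symmetric (nabla s).
Proof.
move=> x y; rewrite /nabla_edge dotC eq_sym.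
by case: (x \in Z n s); case: (y \in Z n s).
Qed.

Lemma connect_Z s (x y : vec e s) : connect (nabla s) x y -> x \in Z n s -> y \in Z n s.
Proof.
case/connectP=> p; case/lastP: p => [|p r] /=; first by move=> _ ->.
by rewrite rcons_path last_rcons => /andP[_ /and4P[]] _ ? _ _ ->.
Qed.

Lemma isolated_connect s (z y : vec e s) : isolatedb n z -> connect (nabla s) z y -> y = z.
Proof.
case/andP=> _ /forallP isol; case/connectP=> [[|r p]] /=; first by move=> _ ->.
case/andP=> /and4P[_ rZ ne_zr] /negP dot_zr _ _; exfalso; apply: dot_zr.
by have := isol r; rewrite rZ eq_sym ne_zr.
Qed.

Lemma nonisolatedP s (z : vec e s) :
  z \in Z n s ->
  reflect (exists x, [/\ x \in Z n s, x != z & dot z x != 0]) (~~ isolatedb n z).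
Proof.
move=> zZ; rewrite /isolatedb zZ negb_forall; apply: (iffP existsP) => -[x].
  by rewrite negb_imply => /andP[/andP[xZ ne_xz] dot_zx]; exists x.
by case=> xZ ne_xz dot_zx; exists x; rewrite xZ ne_xz.
Qed.

Lemma share_connect s (x y : vec e s) :
  x \in Z n s -> y \in Z n s -> (exists j, 0 < coords x j /\ 0 < coords y j) ->
  connect (nabla s) x y.
Proof.
move=> xZ yZ share; have [-> // | ne_xy] := eqVneq x y.
by apply: connect1; rewrite /nabla_edge xZ yZ ne_xy; apply/dot_neq0P.
Qed.

Lemma not_Betti_connect s (x y : vec e s) :
  ~ is_Betti n s -> x \in Z n s -> y \in Z n s -> connect (nabla s) x y.
Proof.
move=> notB xZ yZ; have sym := sym_connect_sym (@nabla_sym s).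
apply/(rootP sym)/eqP/negP => ne_root; apply: notB; apply/card_gt1P.
exists (root (nabla s) x), (root (nabla s) y); rewrite !inE /roots !root_root //.
by rewrite !eqxx -!in_Z !(connect_Z (connect_root _ _)) //; split=> //; apply/negP.
Qed.

(* If z0 is not isolated and every non-isolated factorization is connected to
   z0, the components of nabla_s are that of z0 and the isolated singletons. *)
Lemma nc_isolated_succ s (z0 : vec e s) :
  z0 \in Z n s -> ~~ isolatedb n z0 ->
  (forall z, z \in Z n s -> ~~ isolatedb n z -> connect (nabla s) z z0) ->
  nc n s = (num_isolated n s).+1.
Proof.
move=> z0Z z0_nonisol to_z0; have sym := sym_connect_sym (@nabla_sym s).
set r0 := root (nabla s) z0.
have r0Z : r0 \in Z n s by apply: connect_Z (connect_root _ _) z0Z.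
have r0_nonisol : ~~ isolatedb n r0.
  apply: contraNN z0_nonisol => r0_isol.
  by rewrite (isolated_connect r0_isol (_ : connect _ r0 z0)) // sym connect_root.
rewrite /nc /num_isolated.
have -> : #|[set z : vec e s | isolatedb n z]|.+1 =
          #|[predU1 r0 & [set z : vec e s | isolatedb n z]]|.
  by rewrite cardU1 inE r0_nonisol.
apply: eq_card => x; rewrite !inE /roots; apply/andP/idP.
- case=> /eqP root_x xZ; case: (boolP (isolatedb n x)) => [_ | x_nonisol].
    by rewrite orbT.
  by rewrite orbF -{1}root_x; apply/eqP/(rootP sym); apply: to_z0; rewrite ?inE.
- case/orP=> [/eqP -> | x_isol].
    by split; [rewrite /r0 root_root | rewrite -in_Z].
  split; last by move: x_isol => /andP[]; rewrite inE.
  by rewrite (isolated_connect x_isol (connect_root _ x)).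
Qed.

Lemma pred_coord_neq (p q : 'I_e -> nat) i j :
  0 < p i -> 0 < q i -> p j <> q j -> p j - (j == i) <> q j - (j == i).
Proof. by case: (eqVneq j i) => [-> | _]; rewrite ?subn0; lia. Qed.

Lemma Betti_under s (p q : 'I_e -> nat) j :
  weight p = s -> weight q = s -> p j <> q j ->
  exists b' a, [/\ is_Betti n b', weight a = b' & forall i, a i <= p i].
Proof.
elim/ltn_ind: s p q j => s IH p q j wp wq neq_pq.
have [B | /negP notB] := boolP (1 < nc n s); first by exists s, p.
have ne_pq : fact_of s p != fact_of s q.
  apply: contra_notN neq_pq => /vec_eqP/(_ j).
  by rewrite (coords_fact_of wp) (coords_fact_of wq).
case/connectP: (not_Betti_connect notB (fact_of_Z wp) (fact_of_Z wq)).
case=> [|r path_r] /=; first by move=> _ eq_pq; rewrite eq_pq eqxx in ne_pq.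
case/andP=> /and4P[_ rZ ne_pr /dot_neq0P[i [p_pos r_pos]]] _ _.
rewrite (coords_fact_of wp) in p_pos.
have [k] := vec_neq ne_pr; rewrite (coords_fact_of wp) => neq_pr.
have ltn_s : s - n i < s by have := coord_le_weight p i; have := n_pos i; lia.
move: rZ; rewrite in_Z => /eqP wr.
have [b' [a [B' wa le_a]]] := IH _ ltn_s _ _ _ (weight_pred wp p_pos)
  (weight_pred wr r_pos) (pred_coord_neq p_pos r_pos neq_pr).
by exists b', a; split=> // k'; apply: leq_trans (le_a k') (leq_subr _ _).
Qed.

Lemma nonisolated_Betti_below b (z : vec e b) :
  z \in Z n b -> ~~ isolatedb n z ->
  exists b' a, [/\ Betti_below b b', weight a = b', forall i, a i <= coords z i
                 & exists j, 0 < a j].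
Proof.
move=> zZ /(nonisolatedP zZ)[x [+ ne_xz /dot_neq0P[i [z_pos x_pos]]]].
move: zZ; rewrite !in_Z => /eqP wz /eqP wx.
have [k neq_xz] := vec_neq ne_xz.
have [b' [a [B' wa le_a]]] := Betti_under (weight_pred wz z_pos)
  (weight_pred wx x_pos) (pred_coord_neq z_pos x_pos (nesym neq_xz)).
have le_az k' : a k' <= coords z k' by apply: leq_trans (le_a k') (leq_subr _ _).
have w_diff := weightB le_az; rewrite wz wa in w_diff.
have diff_pos := coord_le_weight (fun k' => coords z k' - a k') i.
(* b - b' = weight (z - a) >= z_i - a_i > 0, since a_i <= z_i - 1. *)
have := le_a i; rewrite eqxx => le_ai.
exists b', a; split=> //; last by apply: weight_pos; rewrite wa Betti_pos.
split=> //; last by move=> eq_b'; rewrite w_diff eq_b' subnn in diff_pos; lia.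
by split; [rewrite -wz -wa weight_mono | exists (fun k' => coords z k' - a k')].
Qed.

Lemma connect_through s (z z' : vec e s) (a t c : 'I_e -> nat) :
  z \in Z n s -> z' \in Z n s -> weight (fun i => a i + t i + c i) = s ->
  (forall i, a i <= coords z i) -> (forall i, c i <= coords z' i) ->
  (exists j, 0 < a j) -> (exists j, 0 < c j) -> connect (nabla s) z z'.
Proof.
move=> zZ z'Z wy le_az le_cz' [j a_pos] [k c_pos].
have y_coords := coords_fact_of wy.
apply: (connect_trans (share_connect zZ (fact_of_Z wy) _)
                      (share_connect (fact_of_Z wy) z'Z _)).
  by exists j; rewrite y_coords; have := le_az j; lia.
by exists k; rewrite y_coords; have := le_cz' k; lia.
Qed.

Lemma no_Betti_below_isolated b :
  is_Betti n b -> (forall b', ~ Betti_below b b') ->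
  Betti_minimal n b /\ (forall z : vec e b, z \in Z n b -> isolated n z).
Proof.
move=> B none; split.
  split=> // y By le_yb; apply/eqP; apply: contraT => ne_yb.
  by case: (none y); split=> //; apply/eqP.
move=> z zZ; split=> // x xZ ne_xz; apply/eqP; apply: contraT => dot_zx.
have /(nonisolated_Betti_below zZ)[b' [a [below _ _ _]]] : ~~ isolatedb n z.
  by apply/(nonisolatedP zZ); exists x.
by case: (none b').
Qed.

(* If bs = b - w is the greatest Betti element strictly below b, every
   non-isolated factorization of b is connected to z0 = u + w (u \in Z(bs)),
   which is not isolated (it meets v + w for another v \in Z(bs)); hence
   nc(nabla_b) = i(b) + 1. *)
Lemma greatest_Betti_below_nc b bs :
  Betti_below b bs -> (forall b', Betti_below b b' -> leS n b' bs) ->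
  nc n b = (num_isolated n b).+1.
Proof.
case=> Bs [le_bsb [w ww]] ne_bsb greatest; rewrite -/(weight w) in ww.
have w_pos : exists j, 0 < w j by apply: weight_pos; rewrite ww; lia.
have [u [v [uZ vZ ne_uv]]] := Betti_two Bs.
move: uZ vZ; rewrite !in_Z => /eqP wu /eqP wv.
have wuw : weight (fun i => coords u i + w i) = b by rewrite weightD wu ww; lia.
have wvw : weight (fun i => coords v i + w i) = b by rewrite weightD wv ww; lia.
have z0Z := fact_of_Z wuw; have z0_coords := coords_fact_of wuw.
have z1_coords := coords_fact_of wvw.
have z0_nonisol : ~~ isolatedb n (fact_of b (fun i => coords u i + w i)).
  apply/(nonisolatedP z0Z); exists (fact_of b (fun i => coords v i + w i)).
  split; first exact: fact_of_Z.
    apply: contraNN ne_uv => /vec_eqP eq_10; apply/vec_eqP => k.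
    by have := eq_10 k; rewrite z0_coords z1_coords; lia.
  apply/dot_neq0P; case: w_pos => j w_pos; exists j.
  by rewrite z0_coords z1_coords; lia.
apply: (nc_isolated_succ z0Z z0_nonisol) => z zZ /(nonisolated_Betti_below zZ)[b' [a [below wa le_az a_pos]]].
have [le_b'bs [t wt]] := greatest b' below; rewrite -/(weight t) in wt.
have [_ [le_b'b _] _] := below.
apply: (connect_through zZ z0Z (t := t) _ le_az _ a_pos w_pos).
  by rewrite !weightD wa wt ww; lia.
by move=> i; rewrite z0_coords leq_addl.
Qed.

End PositiveGenerators.

(* In U(Betti(S)), the Betti elements strictly below b form a chain, so if
   there is one there is a greatest one. *)
Lemma greatest_Betti_below b :
  in_U_Betti n b -> (exists b', Betti_below b b') ->
  exists bs, Betti_below b bs /\ forall b', Betti_below b b' -> leS n b' bs.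
Proof.
case=> Bb chain some.
have [bs [below_bs max_bs]] := bounded_max some (fun k '(And3 _ (conj le_kb _) _) => le_kb).
exists bs; split=> // b' below'; case: (below_bs) (below') => Bs le_bsb _ [B' le_b'b _].
case: (chain b' bs B' Bs le_b'b le_bsb) => // -[le_bsb' _].
have -> : b' = bs by apply/eqP; rewrite eqn_leq le_bsb' max_bs.
exact: leS_refl.
Qed.

End Factorizations.

Theorem theorem5p9 (e : nat) (n : 'I_e -> nat) (b : nat) :
  is_min_gen_numerical_semigroup n ->
  in_U_Betti n b ->
  (Betti_minimal n b /\ (forall z : vec e b, z \in Z n b -> isolated n z))
  \/ num_isolated n b = (nc n b).-1.
Proof.
move=> [n_pos _] Ub.
have [some | none] := classic (exists b', Betti_below n b b').
- right; have [bs [below_bs greatest]] := greatest_Betti_below Ub some.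
  by rewrite (greatest_Betti_below_nc n_pos below_bs greatest).
- left; apply: (no_Betti_below_isolated n_pos (proj1 Ub)) => b' below.
  by apply: none; exists b'.
Qed.
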